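(* With the notation below, \[ \frac{J_{30}^3}{\overline{J}_{0,5}}\cdot \frac{J_{3,6}}{J_{3,30}} - 2\cdot \frac{J_{6,60}\overline{J}_{5,30}\overline{J}_{10,30}}{\overline{J}_{0,5}\overline{J}_{0,30}\overline{J}_{3,30}}\cdot \frac{J_{6}J_{60}}{J_{30}^4} \cdot J_{9,30}J_{21,30}J_{15,30}J_{5,30} =0, \] and \[ 4\cdot \frac{J_{6,60}\overline{J}_{5,30}\overline{J}_{10,30}}{\overline{J}_{0,5}\overline{J}_{0,30}\overline{J}_{3,30}} \cdot \frac{J_{6}J_{60}}{J_{30}^4} \cdot J_{16,30}J_{20,30}J_{26,30} J_{10,30} =J_{4,10}J_{3,15}. \]
   Context: Let $q=e^{2\pi i\tau}$ with $\operatorname{Im}\tau>0$. For $x\in\mathbb{C}^*$, $j(x;q):=\sum_{n\in\mathbb{Z}}(-1)^nq^{n(n-1)/2}x^n=(x;q)_\infty(q/x;q)_\infty(q;q)_\infty$. For integers $a$ and positive integers $m$: $J_{a,m}:=j(q^a;q^m)$, $\overline{J}_{a,m}:=j(-q^a;q^m)$, and $J_m:=\prod_{i\ge1}(1-q^{mi})$. *)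

From Stdlib Require Import Reals ZArith.
From Coquelicot Require Import Coquelicot.

Open Scope C_scope.

Definition zpow (x : C) (n : Z) : C :=
  match n with
  | Z0 => 1
  | Zpos p => Cpow x (Pos.to_nat p)
  | Zneg p => / Cpow x (Pos.to_nat p)
  end.

(* q = e^{2 pi i tau}, written out: e^{-2 pi Im tau} (cos(2 pi Re tau) + i sin(2 pi Re tau)) *)
Definition qtau (tau : C) : C :=
  (exp (- (2 * PI * Im tau)) * cos (2 * PI * Re tau),
   exp (- (2 * PI * Im tau)) * sin (2 * PI * Re tau))%R.

Definition jterm (x q : C) (n : Z) : C :=
  zpow (-1) n * zpow q (n * (n - 1) / 2)%Z * zpow x n.

(* symmetric partial sum  sum_{n=-N}^{N} jterm x q n *)
Definition jpart (x q : C) (N : nat) : C :=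
  sum_n (fun k => jterm x q (Z.of_nat k - Z.of_nat N)%Z) (2 * N).

(* j(x;q) := sum_{n in Z} (-1)^n q^{n(n-1)/2} x^n, as the limit of the partial sums *)
Definition j (x q : C) : C := @lim C_CompleteNormedModule (filtermap (jpart x q) eventually).

Fixpoint Jpart (m : nat) (q : C) (N : nat) : C :=
  match N with
  | O => 1
  | S N' => Jpart m q N' * (1 - Cpow q (m * N))
  end.

Definition Jm (m : nat) (q : C) : C := @lim C_CompleteNormedModule (filtermap (Jpart m q) eventually).

Definition Jam (a : Z) (m : nat) (q : C) : C := j (zpow q a) (Cpow q m).
Definition Jbar (a : Z) (m : nat) (q : C) : C := j (- zpow q a) (Cpow q m).

From Stdlib Require Import Reals ZArith Lia Lra Psatz.
From Coquelicot Require Import Coquelicot.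
Open Scope C_scope.

(** Both identities of the lemma are consequences of the Jacobi triple product.
    By the triple product every theta function in the statement is a product of
    q-Pochhammer symbols: [J_(a,m) = (q^a, q^(m-a), q^m; q^m)_oo],
    [Jbar_(a,m) = (-q^a, -q^(m-a), q^m; q^m)_oo] and [J_m = (q^m; q^m)_oo]; the symbols
    with sign [-1] are rewritten as [(q^(2a); q^(2m))_oo / (q^a; q^m)_oo].  Dissecting
    each [(q^r; q^m)_oo] with [m | 60] along the residues modulo 60 expresses both sides
    of both identities as rational functions of the sixty nonzero blocks
    [(q^r; q^60)_oo], in which they hold identically. *)

Definition converges (u : nat -> C) (l : C) : Prop :=
  forall eps : R, (0 < eps)%R ->
    exists N, forall n, (N <= n)%nat -> (Cmod (u n - l) < eps)%R.

Lemma Csub_0_r (a : C) : a - 0 = a.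
Proof. ring. Qed.

Lemma Cmod_sub_triangle (a b c : C) : (Cmod (a - c) <= Cmod (a - b) + Cmod (b - c))%R.
Proof. replace (a - c) with ((a - b) + (b - c)) by ring. apply Cmod_triangle. Qed.

Lemma Cmod_sub_comm (a b : C) : Cmod (a - b) = Cmod (b - a).
Proof. replace (a - b) with (- (b - a)) by ring. apply Cmod_opp. Qed.

Lemma eq_of_arbitrarily_close (a b : C) :
  (forall eps, (0 < eps)%R -> (Cmod (a - b) < eps)%R) -> a = b.
Proof.
  intros Hclose.
  assert (Hzero : Cmod (a - b) = 0%R).
  { destruct (Rle_lt_or_eq_dec 0 (Cmod (a - b)) (Cmod_ge_0 _)) as [Hpos | Hz]; auto.
    specialize (Hclose _ Hpos). lra. }
  apply Cmod_eq_0 in Hzero.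
  replace a with ((a - b) + b) by ring. rewrite Hzero. ring.
Qed.

Lemma converges_unique u l1 l2 : converges u l1 -> converges u l2 -> l1 = l2.
Proof.
  intros H1 H2. apply eq_of_arbitrarily_close. intros eps Heps.
  destruct (H1 (eps / 2)%R) as [N1 HN1]; [lra|].
  destruct (H2 (eps / 2)%R) as [N2 HN2]; [lra|].
  specialize (HN1 (N1 + N2)%nat ltac:(lia)). specialize (HN2 (N1 + N2)%nat ltac:(lia)).
  pose proof (Cmod_sub_triangle l1 (u (N1 + N2)%nat) l2) as Htri.
  rewrite (Cmod_sub_comm l1 (u _)) in Htri. lra.
Qed.

Lemma converges_const c : converges (fun _ => c) c.
Proof.
  intros eps Heps. exists O. intros n _.
  replace (c - c) with (RtoC 0) by ring. rewrite Cmod_0. lra.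
Qed.

Lemma converges_ext u v l : (forall n, u n = v n) -> converges u l -> converges v l.
Proof.
  intros Huv Hu eps Heps. destruct (Hu eps Heps) as [N HN].
  exists N. intros n Hn. rewrite <- Huv. auto.
Qed.

Lemma converges_subseq u l phi :
  (forall n, (n <= phi n)%nat) -> converges u l -> converges (fun n => u (phi n)) l.
Proof.
  intros Hphi Hu eps Heps. destruct (Hu eps Heps) as [N HN].
  exists N. intros n Hn. apply HN. specialize (Hphi n). lia.
Qed.

Lemma converges_plus u v l m :
  converges u l -> converges v m -> converges (fun n => u n + v n) (l + m).
Proof.
  intros Hu Hv eps Heps.
  destruct (Hu (eps / 2)%R) as [N1 HN1]; [lra|].
  destruct (Hv (eps / 2)%R) as [N2 HN2]; [lra|].
  exists (N1 + N2)%nat. intros n Hn.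
  replace (u n + v n - (l + m)) with ((u n - l) + (v n - m)) by ring.
  eapply Rle_lt_trans; [apply Cmod_triangle|].
  specialize (HN1 n ltac:(lia)). specialize (HN2 n ltac:(lia)). lra.
Qed.

Lemma converges_mult u v l m :
  converges u l -> converges v m -> converges (fun n => u n * v n) (l * m).
Proof.
  intros Hu Hv eps Heps.
  pose proof (Cmod_ge_0 l) as Hl. pose proof (Cmod_ge_0 m) as Hm.
  set (d := Rmin 1 (eps / (1 + Cmod l + Cmod m))).
  assert (Hd : (0 < d)%R).
  { apply Rmin_glb_lt; [lra|]. apply Rdiv_lt_0_compat; lra. }
  assert (Hd1 : (d <= 1)%R) by apply Rmin_l.
  assert (Hdeps : (d * (1 + Cmod l + Cmod m) <= eps)%R).
  { assert (Hr : (d <= eps / (1 + Cmod l + Cmod m))%R) by apply Rmin_r.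
    apply Rmult_le_compat_r with (r := (1 + Cmod l + Cmod m)%R) in Hr; [|lra].
    unfold Rdiv in Hr. rewrite Rmult_assoc, Rinv_l, Rmult_1_r in Hr by lra. exact Hr. }
  destruct (Hu d Hd) as [N1 HN1]. destruct (Hv d Hd) as [N2 HN2].
  exists (N1 + N2)%nat. intros n Hn.
  specialize (HN1 n ltac:(lia)). specialize (HN2 n ltac:(lia)).
  replace (u n * v n - l * m)
    with ((u n - l) * (v n - m) + (l * (v n - m) + m * (u n - l))) by ring.
  eapply Rle_lt_trans; [apply Cmod_triangle|].
  eapply Rle_lt_trans; [apply Rplus_le_compat_l, Cmod_triangle|].
  rewrite !Cmod_mult.
  pose proof (Cmod_ge_0 (u n - l)). pose proof (Cmod_ge_0 (v n - m)).
  nra.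
Qed.

Lemma converges_scal c u l : converges u l -> converges (fun n => c * u n) (c * l).
Proof. intros Hu. apply converges_mult; [apply converges_const | exact Hu]. Qed.

Lemma converges_ball (u : nat -> C) l z B :
  converges u l -> (forall n, (Cmod (u n - z) <= B)%R) -> (Cmod (l - z) <= B)%R.
Proof.
  intros Hu Hb. destruct (Rle_lt_dec (Cmod (l - z)) B) as [Hle | Hgt]; auto.
  destruct (Hu (Cmod (l - z) - B)%R ltac:(lra)) as [N HN].
  specialize (HN N (le_n _)). specialize (Hb N).
  pose proof (Cmod_sub_triangle l (u N) z) as Htri. rewrite (Cmod_sub_comm l (u N)) in Htri. lra.
Qed.

Lemma converges_lim_of_cauchy u :
  (forall eps, (0 < eps)%R -> exists N, forall n m, (N <= n)%nat -> (N <= m)%nat ->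
     (Cmod (u n - u m) < eps)%R) ->
  converges u (@lim C_CompleteNormedModule (filtermap u eventually)).
Proof.
  intros Hcauchy. set (F := filtermap u eventually).
  assert (HF : ProperFilter F) by (apply filtermap_proper_filter, eventually_filter).
  assert (HFc : cauchy F).
  { intros eps. destruct (Hcauchy eps (cond_pos eps)) as [N HN].
    exists (u N), N. intros n Hn. apply (@norm_compat1 C_AbsRing C_NormedModule).
    change (Cmod (u n - u N) < eps)%R. apply HN; lia. }
  pose proof (@complete_cauchy C_CompleteNormedModule F HF HFc) as Hlim.
  intros eps Heps.
  pose proof (@norm_factor_gt_0 C_AbsRing C_NormedModule) as Hnf.
  set (nf := @norm_factor C_AbsRing C_NormedModule) in *.
  assert (Heps' : (0 < eps / nf)%R) by (apply Rdiv_lt_0_compat; lra).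
  destruct (Hlim (mkposreal _ Heps')) as [N HN]. exists N. intros n Hn.
  specialize (HN n Hn). apply (@norm_compat2 C_AbsRing C_NormedModule) in HN.
  change (Cmod (u n - @lim C_CompleteNormedModule F) < nf * (eps / nf))%R in HN.
  replace (nf * (eps / nf))%R with eps in HN by (field; lra). exact HN.
Qed.

Lemma lim_of_converges u l :
  converges u l -> @lim C_CompleteNormedModule (filtermap u eventually) = l.
Proof.
  intros Hu. apply (converges_unique u); [|exact Hu].
  apply converges_lim_of_cauchy. intros eps Heps.
  destruct (Hu (eps / 2)%R ltac:(lra)) as [N HN].
  exists N. intros n m Hn Hm.
  pose proof (Cmod_sub_triangle (u n) l (u m)) as Htri.
  rewrite (Cmod_sub_comm l (u m)) in Htri.
  pose proof (HN n Hn). pose proof (HN m Hm). lra.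
Qed.

Fixpoint prodc (f : nat -> C) (n : nat) : C :=
  match n with O => 1 | S n => prodc f n * f n end.
Fixpoint sumc (f : nat -> C) (n : nat) : C :=
  match n with O => 0 | S n => sumc f n + f n end.
Fixpoint sumr (f : nat -> R) (n : nat) : R :=
  match n with O => 0%R | S n => (sumr f n + f n)%R end.
Arguments prodc f%_C_scope n%_nat_scope.
Arguments sumc f%_C_scope n%_nat_scope.
Arguments sumr f%_R_scope n%_nat_scope.

Lemma prodc_ext (f g : nat -> C) n :
  (forall k, (k < n)%nat -> f k = g k) -> prodc f n = prodc g n.
Proof.
  induction n as [|n IH]; simpl; intros H; auto.
  rewrite IH by (intros; apply H; lia). rewrite H by lia. reflexivity.
Qed.

Lemma prodc_mul f g n : prodc (fun k => f k * g k) n = prodc f n * prodc g n.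
Proof. induction n as [|n IH]; simpl; [ring|]. rewrite IH. ring. Qed.

Lemma prodc_add f a b : prodc f (a + b) = prodc f a * prodc (fun k => f (a + k)%nat) b.
Proof.
  induction b as [|b IH]; simpl; [rewrite Nat.add_0_r; ring|].
  rewrite Nat.add_succ_r. simpl. rewrite IH. ring.
Qed.

Lemma prodc_front f n : prodc f (S n) = f O * prodc (fun k => f (S k)) n.
Proof.
  induction n as [|n IH]; [simpl; ring|].
  change (prodc f (S (S n))) with (prodc f (S n) * f (S n)). rewrite IH. simpl. ring.
Qed.

Lemma prodc_rev f n : prodc f n = prodc (fun k => f (n - 1 - k)%nat) n.
Proof.
  induction n as [|n IH]; [reflexivity|].
  rewrite (prodc_front (fun k => f (S n - 1 - k)%nat)).
  change (prodc f (S n)) with (prodc f n * f n). rewrite IH.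
  replace (S n - 1 - 0)%nat with n by lia. rewrite Cmult_comm. f_equal.
  apply prodc_ext. intros k _. f_equal. lia.
Qed.

Lemma prodc_block f d N :
  prodc f (d * N) = prodc (fun i => prodc (fun k => f (i + d * k)%nat) N) d.
Proof.
  induction N as [|N IH].
  - rewrite Nat.mul_0_r. simpl. induction d as [|d IHd]; simpl; auto. rewrite <- IHd. ring.
  - replace (d * S N)%nat with (d * N + d)%nat by lia. rewrite prodc_add, IH.
    simpl. rewrite prodc_mul. f_equal. apply prodc_ext. intros k _. f_equal. lia.
Qed.

Lemma prodc_neq0 (f : nat -> C) n : (forall k, (k < n)%nat -> f k <> 0) -> prodc f n <> 0.
Proof.
  induction n as [|n IH]; simpl; intros H; [apply C1_nz|].
  apply Cmult_neq_0; [apply IH; intros; apply H; lia | apply H; lia].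
Qed.

Lemma converges_prodc (g : nat -> nat -> C) (l : nat -> C) d :
  (forall i, (i < d)%nat -> converges (g i) (l i)) ->
  converges (fun N => prodc (fun i => g i N) d) (prodc l d).
Proof.
  induction d as [|d IH]; intros H; simpl; [apply converges_const|].
  apply converges_mult; [apply IH; intros; apply H; lia | apply H; lia].
Qed.

Lemma sumc_ext (f g : nat -> C) n :
  (forall k, (k < n)%nat -> f k = g k) -> sumc f n = sumc g n.
Proof.
  induction n as [|n IH]; simpl; intros H; auto.
  rewrite IH by (intros; apply H; lia). rewrite H by lia. reflexivity.
Qed.

Lemma sumc_front (f : nat -> C) n : sumc f (S n) = f O + sumc (fun k => f (S k)) n.
Proof.
  induction n as [|n IH]; [simpl; ring|].
  change (sumc f (S (S n))) with (sumc f (S n) + f (S n)). rewrite IH. simpl. ring.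
Qed.

Lemma sumc_plus (f g : nat -> C) n : sumc (fun k => f k + g k) n = sumc f n + sumc g n.
Proof. induction n as [|n IH]; simpl; [ring|]. rewrite IH. ring. Qed.

Lemma sumc_minus (f g : nat -> C) n : sumc (fun k => f k - g k) n = sumc f n - sumc g n.
Proof. induction n as [|n IH]; simpl; [ring|]. rewrite IH. ring. Qed.

Lemma sumc_scal (c : C) (f : nat -> C) n : sumc (fun k => c * f k) n = c * sumc f n.
Proof. induction n as [|n IH]; simpl; [ring|]. rewrite IH. ring. Qed.

(** Coquelicot's [sum_n f n] has [n + 1] terms. *)
Lemma sum_n_sumc (f : nat -> C) n : sum_n f n = sumc f (S n).
Proof.
  induction n as [|n IH]; [rewrite sum_O; simpl; ring|].
  rewrite sum_Sn, IH. reflexivity.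
Qed.

Lemma sumr_ext (f g : nat -> R) n :
  (forall k, (k < n)%nat -> f k = g k) -> sumr f n = sumr g n.
Proof.
  induction n as [|n IH]; simpl; intros H; auto.
  rewrite IH by (intros; apply H; lia). rewrite H by lia. reflexivity.
Qed.

Lemma sumr_le (f g : nat -> R) n :
  (forall k, (k < n)%nat -> (f k <= g k)%R) -> (sumr f n <= sumr g n)%R.
Proof.
  induction n as [|n IH]; simpl; intros H; [lra|].
  pose proof (H n ltac:(lia)). pose proof (IH ltac:(intros; apply H; lia)). lra.
Qed.

Lemma sumr_nonneg (f : nat -> R) n :
  (forall k, (k < n)%nat -> (0 <= f k)%R) -> (0 <= sumr f n)%R.
Proof.
  induction n as [|n IH]; simpl; intros H; [lra|].
  pose proof (H n ltac:(lia)). pose proof (IH ltac:(intros; apply H; lia)). lra.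
Qed.

Lemma sumr_scal (c : R) (f : nat -> R) n : sumr (fun k => c * f k)%R n = (c * sumr f n)%R.
Proof. induction n as [|n IH]; simpl; [ring|]. rewrite IH. ring. Qed.

Lemma Cmod_sumc (f : nat -> C) n : (Cmod (sumc f n) <= sumr (fun k => Cmod (f k)) n)%R.
Proof.
  induction n as [|n IH]; simpl; [rewrite Cmod_0; lra|].
  eapply Rle_trans; [apply Cmod_triangle|]. lra.
Qed.

Lemma pow_le_one (r : R) n : (0 <= r <= 1)%R -> (r ^ n <= 1)%R.
Proof.
  intros Hr. induction n as [|n IH]; simpl; [lra|].
  assert (0 <= r ^ n)%R by (apply pow_le; lra). nra.
Qed.

Lemma pow_ge_one (a : R) n : (1 <= a)%R -> (1 <= a ^ n)%R.
Proof. intros Ha. induction n as [|n IH]; simpl; nra. Qed.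

Lemma pow_antitone (r : R) a b : (0 <= r <= 1)%R -> (a <= b)%nat -> (r ^ b <= r ^ a)%R.
Proof.
  intros Hr Hab. replace b with (a + (b - a))%nat by lia. rewrite pow_add.
  assert (0 <= r ^ a)%R by (apply pow_le; lra).
  assert (r ^ (b - a) <= 1)%R by (apply pow_le_one; lra). nra.
Qed.

Lemma pow_eventually_small (r : R) : (0 <= r < 1)%R ->
  forall y, (0 < y)%R -> exists N, forall n, (N <= n)%nat -> (r ^ n < y)%R.
Proof.
  intros Hr y Hy. destruct (pow_lt_1_zero r) with y as [N HN]; auto.
  { rewrite Rabs_pos_eq; lra. }
  exists N. intros n Hn. specialize (HN n Hn).
  rewrite Rabs_pos_eq in HN; auto. apply pow_le; lra.
Qed.

Lemma pow_le_sqrt_pow (r : R) a b :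
  (0 <= r <= 1)%R -> (b <= 2 * a)%nat -> (r ^ a <= sqrt r ^ b)%R.
Proof.
  intros Hr Hab. replace (r ^ a)%R with (sqrt r ^ (2 * a))%R.
  - apply pow_antitone; auto. split; [apply sqrt_pos|].
    rewrite <- sqrt_1. apply sqrt_le_1_alt. lra.
  - rewrite pow_mult, pow2_sqrt by lra. reflexivity.
Qed.

Lemma geom_tail (K r : R) c n : (0 <= K)%R -> (0 <= r < 1)%R ->
  (sumr (fun k => K * r ^ (c + k))%R n <= K * r ^ c / (1 - r))%R.
Proof.
  intros HK Hr.
  assert (Hgeom : (sumr (fun k => r ^ k) n * (1 - r) = 1 - r ^ n)%R).
  { induction n as [|n IH]; simpl; [ring|]. rewrite Rmult_plus_distr_r, IH. ring. }
  assert (Hbound : (sumr (fun k => r ^ k) n <= / (1 - r))%R).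
  { assert (0 <= r ^ n)%R by (apply pow_le; lra).
    apply Rmult_le_reg_r with (1 - r)%R; [lra|]. rewrite Hgeom, Rinv_l by lra. lra. }
  rewrite (sumr_ext _ (fun k => (K * r ^ c) * r ^ k)%R)
    by (intros; rewrite pow_add; ring).
  rewrite sumr_scal. unfold Rdiv. apply Rmult_le_compat_l; auto.
  apply Rmult_le_pos; auto. apply pow_le; lra.
Qed.

Lemma exp_monotone a b : (a <= b)%R -> (exp a <= exp b)%R.
Proof.
  intros Hab. destruct (Rle_lt_or_eq_dec _ _ Hab) as [Hlt | Heq].
  - left. apply exp_increasing; auto.
  - subst; lra.
Qed.

Lemma exp_sub_one_le t : (0 <= t)%R -> (exp t - 1 <= t * exp t)%R.
Proof.
  intros Ht. pose proof (exp_ineq1_le (- t)).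
  assert (exp (- t) * exp t = 1)%R
    by (rewrite <- exp_plus; replace (- t + t)%R with 0%R by ring; apply exp_0).
  pose proof (exp_pos t). nra.
Qed.

Lemma prod_dev_bound (v : nat -> C) n :
  (Cmod (prodc (fun k => (1 - v k)%C) n - 1) <= exp (sumr (fun k => Cmod (v k)) n) - 1)%R.
Proof.
  induction n as [|n IH]; simpl.
  - replace (1 - 1) with (RtoC 0) by ring. rewrite Cmod_0, exp_0. lra.
  - set (P := prodc (fun k => 1 - v k) n) in *. set (S := sumr (fun k => Cmod (v k)) n) in *.
    replace (P * (1 - v n) - 1) with ((P - 1) * (1 - v n) - v n) by ring.
    eapply Rle_trans; [apply Cmod_triangle|]. rewrite Cmod_mult, Cmod_opp.
    pose proof (Cmod_triangle 1 (- v n)) as Htri.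
    rewrite Cmod_1, Cmod_opp in Htri.
    pose proof (Cmod_ge_0 (v n)). pose proof (Cmod_ge_0 (P - 1)).
    pose proof (exp_ineq1_le (Cmod (v n))). rewrite exp_plus.
    pose proof (exp_pos S). pose proof (exp_pos (Cmod (v n))).
    assert (Cmod (P - 1) * Cmod (1 - v n) <= (exp S - 1) * (1 + Cmod (v n)))%R
      by (apply Rmult_le_compat; auto; apply Cmod_ge_0).
    nra.
Qed.

Lemma prod_mod_bound (v : nat -> C) n :
  (Cmod (prodc (fun k => (1 - v k)%C) n) <= exp (sumr (fun k => Cmod (v k)) n))%R.
Proof.
  pose proof (prod_dev_bound v n) as Hdev.
  pose proof (Cmod_sub_triangle (prodc (fun k => 1 - v k) n) 1 0) as Htri.
  rewrite !Csub_0_r, Cmod_1 in Htri. lra.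
Qed.

Section GeometricProducts.
Variables (v : nat -> C) (K r : R).
Hypothesis HK : (0 <= K)%R.
Hypothesis Hr : (0 <= r < 1)%R.
Hypothesis Hdom : forall k, (Cmod (v k) <= K * r ^ k)%R.

Let P := prodc (fun k => 1 - v k).

Lemma dominated_tail_sum c n :
  (sumr (fun k => Cmod (v (c + k)%nat)) n <= K * r ^ c / (1 - r))%R.
Proof.
  eapply Rle_trans; [apply sumr_le; intros k _; apply Hdom|]. apply geom_tail; auto.
Qed.

Lemma tail_sum_nonneg c n : (0 <= sumr (fun k => Cmod (v (c + k)%nat)) n)%R.
Proof. apply sumr_nonneg. intros; apply Cmod_ge_0. Qed.

Lemma prod_increment_bound n d :
  (Cmod (P (n + d)%nat - P n) <= exp (K / (1 - r)) ^ 2 * (K * r ^ n / (1 - r)))%R.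
Proof.
  set (S := (K / (1 - r))%R).
  unfold P. rewrite prodc_add.
  set (Pn := prodc (fun k => 1 - v k) n).
  set (T := prodc (fun k => 1 - v (n + k)%nat) d).
  replace (Pn * T - Pn) with (Pn * (T - 1)) by ring. rewrite Cmod_mult.
  assert (HPn : (Cmod Pn <= exp S)%R).
  { eapply Rle_trans; [apply prod_mod_bound|]. apply exp_monotone.
    pose proof (dominated_tail_sum 0 n) as Hsum. simpl in Hsum.
    unfold S. rewrite Rmult_1_r in Hsum. exact Hsum. }
  set (t := sumr (fun k => Cmod (v (n + k)%nat)) d).
  assert (Ht : (t <= K * r ^ n / (1 - r))%R) by apply dominated_tail_sum.
  assert (Ht0 : (0 <= t)%R) by apply tail_sum_nonneg.
  assert (HtS : (t <= S)%R).
  { eapply Rle_trans; [apply Ht|]. unfold S, Rdiv. apply Rmult_le_compat_r.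
    - apply Rlt_le, Rinv_0_lt_compat; lra.
    - assert (r ^ n <= 1)%R by (apply pow_le_one; lra). nra. }
  assert (HT : (Cmod (T - 1) <= t * exp S)%R).
  { eapply Rle_trans; [apply (prod_dev_bound (fun k => v (n + k)%nat))|].
    eapply Rle_trans; [apply exp_sub_one_le; auto|].
    apply Rmult_le_compat_l; auto. apply exp_monotone; auto. }
  pose proof (Cmod_ge_0 Pn). pose proof (Cmod_ge_0 (T - 1)). pose proof (exp_pos S).
  assert (Cmod Pn * Cmod (T - 1) <= exp S * (t * exp S))%R by (apply Rmult_le_compat; auto).
  simpl. nra.
Qed.

Lemma prod_converges : converges P (@lim C_CompleteNormedModule (filtermap P eventually)).
Proof.
  apply converges_lim_of_cauchy.
  set (B := (exp (K / (1 - r)) ^ 2 * (K + 1) / (1 - r))%R).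
  assert (HB : (0 < B)%R).
  { unfold B. pose proof (exp_pos (K / (1 - r))).
    apply Rdiv_lt_0_compat; [|lra]. apply Rmult_lt_0_compat; [apply pow_lt|]; lra. }
  intros eps Heps.
  destruct (pow_eventually_small r Hr (eps / B)%R) as [N HN];
    [apply Rdiv_lt_0_compat; auto|].
  assert (Hmono : forall a b, (N <= a)%nat -> (a <= b)%nat -> (Cmod (P b - P a) < eps)%R).
  { intros a b Ha Hab. replace b with (a + (b - a))%nat by lia.
    eapply Rle_lt_trans; [apply prod_increment_bound|].
    specialize (HN a Ha).
    assert (Hlt : (r ^ a * B < eps)%R).
    { apply Rmult_lt_reg_r with (/ B)%R; [apply Rinv_0_lt_compat; auto|].
      rewrite Rmult_assoc, Rinv_r, Rmult_1_r by lra. exact HN. }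
    assert (0 <= r ^ a)%R by (apply pow_le; lra).
    assert (0 < exp (K / (1 - r)) ^ 2 / (1 - r))%R
      by (apply Rdiv_lt_0_compat; [apply pow_lt, exp_pos | lra]).
    enough (exp (K / (1 - r)) ^ 2 * (K * r ^ a / (1 - r)) <= r ^ a * B)%R by lra.
    unfold B. replace (exp (K / (1 - r)) ^ 2 * (K * r ^ a / (1 - r)))%R
      with (exp (K / (1 - r)) ^ 2 / (1 - r) * (K * r ^ a))%R by (field; lra).
    replace (r ^ a * (exp (K / (1 - r)) ^ 2 * (K + 1) / (1 - r)))%R
      with (exp (K / (1 - r)) ^ 2 / (1 - r) * ((K + 1) * r ^ a))%R by (field; lra).
    apply Rmult_le_compat_l; nra. }
  exists N. intros n m Hn Hm. destruct (Nat.le_ge_cases n m).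
  - rewrite Cmod_sub_comm. apply Hmono; auto.
  - apply Hmono; auto.
Qed.

(** Once the tail sum is at most [1/4], the tail product stays in the disc of radius
    [3/4] around 1, so the partial products stay away from 0. *)
Lemma prod_tail_lower_bound k0 d :
  (K * r ^ k0 / (1 - r) <= / 4)%R -> (Cmod (P k0) / 4 <= Cmod (P (k0 + d)%nat))%R.
Proof.
  intros Hsmall. unfold P. rewrite prodc_add, Cmod_mult.
  set (T := prodc (fun k => 1 - v (k0 + k)%nat) d).
  set (t := sumr (fun k => Cmod (v (k0 + k)%nat)) d).
  assert (Ht : (t <= / 4)%R) by (eapply Rle_trans; [apply dominated_tail_sum | exact Hsmall]).
  assert (Ht0 : (0 <= t)%R) by apply tail_sum_nonneg.
  assert (HT : (Cmod (T - 1) <= t * exp t)%R).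
  { eapply Rle_trans; [apply (prod_dev_bound (fun k => v (k0 + k)%nat))|].
    apply exp_sub_one_le; auto. }
  assert (exp t <= 3)%R
    by (eapply Rle_trans; [apply exp_monotone with (b := 1%R); lra | apply exp_le_3]).
  assert (Cmod (T - 1) <= 3 / 4)%R by nra.
  pose proof (Cmod_sub_triangle 1 T 0) as Htri.
  rewrite !Csub_0_r, Cmod_1, Cmod_sub_comm in Htri.
  pose proof (Cmod_ge_0 (prodc (fun k => 1 - v k) k0)). nra.
Qed.

Lemma prod_limit_neq0 l : (forall k, 1 - v k <> 0) -> converges P l -> l <> 0.
Proof.
  intros Hnz Hl Hl0. subst l.
  destruct (pow_eventually_small r Hr (/ 4 * (1 - r) / (K + 1))%R) as [k0 Hk0];
    [apply Rdiv_lt_0_compat; lra|].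
  specialize (Hk0 k0 (le_n _)).
  assert (HP0 : (0 < Cmod (P k0))%R) by (apply Cmod_gt_0, prodc_neq0; auto).
  assert (Hsmall : (K * r ^ k0 / (1 - r) <= / 4)%R).
  { assert (0 <= r ^ k0)%R by (apply pow_le; lra).
    assert (Hlt : ((K + 1) * r ^ k0 < / 4 * (1 - r))%R).
    { apply Rmult_lt_reg_r with (/ (K + 1))%R; [apply Rinv_0_lt_compat; lra|].
      replace ((K + 1) * r ^ k0 * / (K + 1))%R with (r ^ k0)%R by (field; lra). exact Hk0. }
    apply Rmult_le_reg_r with (1 - r)%R; [lra|].
    unfold Rdiv. rewrite Rmult_assoc, Rinv_l by lra. nra. }
  destruct (Hl (Cmod (P k0) / 4)%R) as [N HN]; [lra|].
  specialize (HN (k0 + N)%nat ltac:(lia)). rewrite Csub_0_r in HN.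
  pose proof (prod_tail_lower_bound k0 N Hsmall). lra.
Qed.

End GeometricProducts.

Lemma neg_one_neq0 : (-1 : C) <> 0.
Proof. intros H. apply C1_nz. replace (RtoC 1) with (- (-1) : C) by ring. rewrite H. ring. Qed.

Lemma Cmult_reg_r (x y z : C) : z <> 0 -> x * z = y * z -> x = y.
Proof. intros Hz H. replace x with (x * z * / z) by (field; auto). rewrite H. field; auto. Qed.

Lemma zpow_as_quotient (c : C) (a : Z) :
  c <> 0 -> zpow c a = c ^ Z.to_nat a / c ^ Z.to_nat (- a).
Proof. intros Hc. destruct a; simpl; field. apply Cpow_nz; auto. Qed.

Lemma zpow_add (c : C) a b : c <> 0 -> zpow c (a + b) = zpow c a * zpow c b.
Proof.
  intros Hc. rewrite !zpow_as_quotient by auto.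
  assert (Hnz : forall n, c ^ n <> 0) by (intros; apply Cpow_nz; auto).
  assert (Hexp : c ^ Z.to_nat (a + b) * c ^ Z.to_nat (- a) * c ^ Z.to_nat (- b) =
                 c ^ Z.to_nat a * c ^ Z.to_nat b * c ^ Z.to_nat (- (a + b))).
  { rewrite <- !Cpow_add_r. f_equal. lia. }
  apply (Cmult_reg_r _ _ (c ^ Z.to_nat (- (a + b)) * c ^ Z.to_nat (- a) * c ^ Z.to_nat (- b))).
  { repeat apply Cmult_neq_0; auto. }
  transitivity (c ^ Z.to_nat (a + b) * c ^ Z.to_nat (- a) * c ^ Z.to_nat (- b)); [field; auto|].
  rewrite Hexp. field; auto.
Qed.

Lemma zpow_nat (c : C) n : zpow c (Z.of_nat n) = c ^ n.
Proof. destruct n; [reflexivity|]. simpl. rewrite SuccNat2Pos.id_succ. reflexivity. Qed.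

Lemma zpow_neg_nat (c : C) n : c <> 0 -> zpow c (- Z.of_nat n) = / c ^ n.
Proof.
  intros Hc. rewrite zpow_as_quotient, Z.opp_involutive, Nat2Z.id by auto.
  replace (Z.to_nat (- Z.of_nat n)) with O by lia. simpl. field. apply Cpow_nz; auto.
Qed.

Fixpoint tri (n : nat) : nat := match n with O => O | S n' => (tri n' + n')%nat end.

Lemma tri_spec k : (2 * Z.of_nat (tri k) = Z.of_nat k * (Z.of_nat k - 1))%Z.
Proof.
  induction k as [|k IH]; simpl tri; [reflexivity|].
  rewrite Nat2Z.inj_add, Nat2Z.inj_succ. nia.
Qed.

Lemma half_exact (w i : Z) : (i * (i - 1) = w * 2)%Z -> (i * (i - 1) / 2 = w)%Z.
Proof. intros H. rewrite H. apply Z.div_mul. lia. Qed.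

Fixpoint gauss_binom (Q : C) (N m : nat) : C :=
  match N, m with
  | _, O => 1
  | O, S _ => 0
  | S N', S m' => gauss_binom Q N' (S m') + Q ^ (N' - m') * gauss_binom Q N' m'
  end.

Lemma gauss_binom_above Q N m : (N < m)%nat -> gauss_binom Q N m = 0.
Proof.
  revert m; induction N as [|N IH]; intros m Hm; destruct m; try lia; simpl; auto.
  rewrite !IH by lia. ring.
Qed.

Lemma q_binomial (Q z : C) N :
  prodc (fun i => 1 + z * Q ^ i) N
  = sumc (fun m => gauss_binom Q N m * Q ^ tri m * z ^ m) (S N).
Proof.
  induction N as [|N IH]; [simpl; ring|].
  change (prodc (fun i => 1 + z * Q ^ i) (S N))
    with (prodc (fun i => 1 + z * Q ^ i) N * (1 + z * Q ^ N)).
  rewrite IH.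
  transitivity (sumc (fun m => gauss_binom Q N m * Q ^ tri m * z ^ m) (S N)
                + sumc (fun m => (z * Q ^ N) * (gauss_binom Q N m * Q ^ tri m * z ^ m)) (S N)).
  { rewrite sumc_scal. ring. }
  rewrite (sumc_front (fun m => gauss_binom Q (S N) m * Q ^ tri m * z ^ m)).
  rewrite (sumc_ext (fun k => gauss_binom Q (S N) (S k) * Q ^ tri (S k) * z ^ S k)
     (fun k => gauss_binom Q N (S k) * Q ^ tri (S k) * z ^ S k
               + (z * Q ^ N) * (gauss_binom Q N k * Q ^ tri k * z ^ k))).
  2:{ intros k Hk. simpl gauss_binom. simpl tri.
      replace (Q ^ N) with (Q ^ (N - k) * Q ^ k) by (rewrite <- Cpow_add_r; f_equal; lia).
      rewrite !Cpow_add_r. simpl. ring. }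
  rewrite sumc_plus.
  assert (Hshift : sumc (fun m => gauss_binom Q N m * Q ^ tri m * z ^ m) (S N) =
                   1 + sumc (fun k => gauss_binom Q N (S k) * Q ^ tri (S k) * z ^ S k) (S N)).
  { rewrite sumc_front. simpl sumc at 2. rewrite (gauss_binom_above Q N (S N)) by lia.
    replace (gauss_binom Q N 0) with (RtoC 1) by (destruct N; reflexivity). simpl. ring. }
  rewrite Hshift. simpl. ring.
Qed.

Definition qfact (Q : C) (n : nat) : C := prodc (fun k => 1 - Q ^ S k) n.

Lemma gauss_binom_closed Q N m :
  (m <= N)%nat -> gauss_binom Q N m * qfact Q m * qfact Q (N - m) = qfact Q N.
Proof.
  revert m. induction N as [|N IH]; intros m Hm.
  - destruct m; [|lia]. simpl. unfold qfact. simpl. ring.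
  - destruct m as [|m].
    + rewrite Nat.sub_0_r. simpl gauss_binom. unfold qfact at 1. simpl prodc. ring.
    + simpl gauss_binom. destruct (Nat.eq_dec m N) as [-> | Hne].
      * rewrite (gauss_binom_above Q N (S N)), Nat.sub_diag by lia.
        pose proof (IH N (le_n _)) as IHN. rewrite Nat.sub_diag in IHN.
        change (qfact Q (S N)) with (qfact Q N * (1 - Q ^ S N)).
        transitivity ((gauss_binom Q N N * qfact Q N * qfact Q 0) * (1 - Q ^ S N));
          [rewrite Nat.sub_diag; simpl; ring | now rewrite IHN].
      * destruct (N - m)%nat as [|k] eqn:Hk; [lia|].
        pose proof (IH (S m) ltac:(lia)) as IH1. replace (N - S m)%nat with k in IH1 by lia.
        pose proof (IH m ltac:(lia)) as IH2. rewrite Hk in IH2.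
        replace (S N - S m)%nat with (S k) by lia.
        change (qfact Q (S m)) with (qfact Q m * (1 - Q ^ S m)) in *.
        change (qfact Q (S k)) with (qfact Q k * (1 - Q ^ S k)) in *.
        change (qfact Q (S N)) with (qfact Q N * (1 - Q ^ S N)).
        assert (Hpow : Q ^ S k * Q ^ S m = Q ^ S N) by (rewrite <- Cpow_add_r; f_equal; lia).
        transitivity
          (gauss_binom Q N (S m) * (qfact Q m * (1 - Q ^ S m)) * qfact Q k * (1 - Q ^ S k)
           + Q ^ S k * (gauss_binom Q N m * qfact Q m * (qfact Q k * (1 - Q ^ S k)))
             * (1 - Q ^ S m)); [ring|].
        rewrite IH1, IH2, <- Hpow. ring.
Qed.

(** The exponent identity behind the shift [m |-> m - n] of summation index. *)
Lemma shift_exponent m n :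
  ((Z.of_nat m - Z.of_nat n) * (Z.of_nat m - Z.of_nat n - 1) / 2 + Z.of_nat (n * m)
   = Z.of_nat (tri m + tri (S n)))%Z.
Proof.
  pose proof (tri_spec m). pose proof (tri_spec (S n)).
  rewrite (half_exact (Z.of_nat (tri m) + Z.of_nat (tri (S n)) - Z.of_nat n * Z.of_nat m)).
  - rewrite Nat2Z.inj_add, Nat2Z.inj_mul. ring.
  - rewrite Nat2Z.inj_succ in *. nia.
Qed.

Lemma prod_neg_ratio (x Q : C) n :
  Q <> 0 -> prodc (fun k => - x / Q ^ S k) n = (- x) ^ n / Q ^ tri (S n).
Proof.
  intros HQ. induction n as [|n IH]; [simpl; field|].
  change (prodc (fun k => - x / Q ^ S k) (S n))
    with (prodc (fun k => - x / Q ^ S k) n * (- x / Q ^ S n)).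
  rewrite IH. change (tri (S (S n))) with (tri (S n) + S n)%nat. rewrite Cpow_add_r.
  change ((- x) ^ (S n)) with (- x * (- x) ^ n). field. split; apply Cpow_nz; auto.
Qed.

Lemma div_of_mult_eq (a b c : C) : b <> 0 -> a * b = c -> a = c / b.
Proof. intros Hb H. rewrite <- H. field. auto. Qed.

Lemma theta_term_shift (x Q : C) m n : x <> 0 -> Q <> 0 ->
  Q ^ tri m * (- x / Q ^ n) ^ m
  = prodc (fun k => - x / Q ^ S k) n * jterm x Q (Z.of_nat m - Z.of_nat n).
Proof.
  intros Hx HQ. rewrite prod_neg_ratio by auto. unfold jterm.
  set (i := (Z.of_nat m - Z.of_nat n)%Z).
  assert (Hsign : zpow (-1) i * (-1) ^ n = (-1) ^ m).
  { rewrite <- (zpow_nat (-1) n), <- zpow_add, <- zpow_nat by apply neg_one_neq0.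
    f_equal. unfold i. lia. }
  assert (Hx_pow : zpow x i * x ^ n = x ^ m).
  { rewrite <- (zpow_nat x n), <- zpow_add, <- zpow_nat by auto. f_equal. unfold i. lia. }
  assert (HQ_pow : zpow Q (i * (i - 1) / 2) * Q ^ (n * m) = Q ^ tri m * Q ^ tri (S n)).
  { rewrite <- (zpow_nat Q (n * m)), <- zpow_add, <- Cpow_add_r, <- zpow_nat by auto.
    f_equal. apply shift_exponent. }
  apply div_of_mult_eq in Hsign, Hx_pow, HQ_pow; try (apply Cpow_nz; auto using neg_one_neq0).
  rewrite Hsign, Hx_pow, HQ_pow.
  replace (- x / Q ^ n) with ((-1) * x * / Q ^ n) by (field; apply Cpow_nz; auto).
  replace (- x) with ((-1) * x) by ring.
  rewrite !Cpow_mult_l, Cpow_inv, <- Cpow_mult_r by (apply Cpow_nz; auto).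
  field. repeat split; apply Cpow_nz; auto using neg_one_neq0.
Qed.

Definition theta_prod (x Q : C) (n : nat) : C :=
  prodc (fun k => (1 - x * Q ^ k) * (1 - Q ^ S k / x)) n.

(** Finite Jacobi triple product: the q-binomial theorem with [2n] factors at
    [z = -x/Q^n] expands the theta product into theta-series terms weighted by
    Gaussian binomials. *)
Lemma finite_triple_product (x Q : C) n : x <> 0 -> Q <> 0 ->
  theta_prod x Q n
  = sumc (fun m => jterm x Q (Z.of_nat m - Z.of_nat n) * gauss_binom Q (n + n) m) (S (n + n)).
Proof.
  intros Hx HQ.
  set (z := - x / Q ^ n).
  set (c := prodc (fun k => - x / Q ^ S k) n).
  pose proof (q_binomial Q z (n + n)) as Hbin.
  rewrite prodc_add, prodc_rev in Hbin.
  rewrite (prodc_ext (fun k => 1 + z * Q ^ (n - 1 - k))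
             (fun k => (- x / Q ^ S k) * (1 - Q ^ S k / x))) in Hbin.
  2:{ intros k Hk. unfold z.
      assert (Hpow : Q ^ (n - 1 - k) * Q ^ S k = Q ^ n) by (rewrite <- Cpow_add_r; f_equal; lia).
      rewrite <- Hpow. field. split; auto. split; apply Cpow_nz; auto. }
  rewrite (prodc_ext (fun k => 1 + z * Q ^ (n + k)) (fun k => 1 - x * Q ^ k)) in Hbin.
  2:{ intros k _. unfold z. rewrite Cpow_add_r. field. apply Cpow_nz; auto. }
  rewrite prodc_mul in Hbin. fold c in Hbin.
  rewrite (sumc_ext _ (fun m => c * (jterm x Q (Z.of_nat m - Z.of_nat n)
                                     * gauss_binom Q (n + n) m))), sumc_scal in Hbin.
  2:{ intros m _. unfold c, z. rewrite <- Cmult_assoc, theta_term_shift by auto. ring. }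
  assert (Hc : c <> 0).
  { apply prodc_neq0. intros k _ H0. apply Hx.
    assert (Hxk : - x = (- x / Q ^ S k) * Q ^ S k) by (field; apply Cpow_nz; auto).
    rewrite H0 in Hxk. replace x with (- (- x)) by ring. rewrite Hxk. ring. }
  unfold theta_prod. rewrite prodc_mul.
  apply (Cmult_reg_r _ _ _ Hc). rewrite (Cmult_comm (sumc _ _)), <- Hbin. ring.
Qed.

Lemma gaussian_ratio (r X : R) l :
  (r ^ tri (S l) * X ^ S l = (r ^ tri l * X ^ l) * (r ^ l * X))%R.
Proof. change (tri (S l)) with (tri l + l)%nat. rewrite pow_add. simpl. ring. Qed.

(** Gaussian decay: for [0 < r < 1], [r^(l(l-1)/2) X^l = O(r^(2l))]. Beyond the index [L]
    where [r^L (X + 1) < r^2], each step multiplies the left side by at most [r^2]. *)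
Lemma gaussian_decay (r X : R) : (0 < r < 1)%R -> (0 <= X)%R ->
  exists A, (0 <= A)%R /\ forall l, (r ^ tri l * X ^ l <= A * r ^ (2 * l))%R.
Proof.
  intros Hr HX.
  destruct (pow_eventually_small r ltac:(lra) (r ^ 2 / (X + 1))%R) as [L HL].
  { apply Rdiv_lt_0_compat; [apply pow_lt|]; lra. }
  set (A := ((X + 1) ^ L * / r ^ (2 * L))%R).
  assert (Hr2L : (0 < r ^ (2 * L))%R) by (apply pow_lt; lra).
  assert (HXL : (1 <= (X + 1) ^ L)%R) by (apply pow_ge_one; lra).
  assert (HA : (0 <= A)%R) by (apply Rmult_le_pos; [lra | left; apply Rinv_0_lt_compat; auto]).
  exists A. split; auto.
  assert (Hpos : forall n, (0 <= r ^ n)%R) by (intros; apply pow_le; lra).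
  assert (HXpos : forall n, (0 <= X ^ n)%R) by (intros; apply pow_le; lra).
  assert (Hinitial : forall l, (l <= L)%nat -> (r ^ tri l * X ^ l <= A * r ^ (2 * l))%R).
  { intros l Hl.
    assert (r ^ tri l <= 1)%R by (apply pow_le_one; lra).
    assert (X ^ l <= (X + 1) ^ L)%R.
    { eapply Rle_trans; [apply pow_incr with (y := (X + 1)%R); lra|].
      apply Rle_pow; [lra | lia]. }
    assert ((X + 1) ^ L <= A * r ^ (2 * l))%R.
    { unfold A. apply Rmult_le_reg_r with (r ^ (2 * L))%R; auto.
      replace ((X + 1) ^ L * / r ^ (2 * L) * r ^ (2 * l) * r ^ (2 * L))%R
        with ((X + 1) ^ L * r ^ (2 * l))%R by (field; lra).
      apply Rmult_le_compat_l; [lra|]. apply pow_antitone; [lra | lia]. }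
    pose proof (Hpos (tri l)). pose proof (HXpos l). nra. }
  intros l. induction l as [|l IH]; [apply Hinitial; lia|].
  destruct (le_lt_dec (S l) L) as [Hle | Hgt]; [apply Hinitial; auto|].
  specialize (HL l ltac:(lia)).
  assert (Hstep : (r ^ l * X <= r ^ 2)%R).
  { assert (r ^ l * (X + 1) < r ^ 2)%R.
    { apply Rmult_lt_reg_r with (/ (X + 1))%R; [apply Rinv_0_lt_compat; lra|].
      replace (r ^ l * (X + 1) * / (X + 1))%R with (r ^ l)%R by (field; lra). exact HL. }
    pose proof (Hpos l). nra. }
  replace (2 * S l)%nat with (2 * l + 2)%nat by lia.
  rewrite gaussian_ratio, pow_add, <- (Rmult_assoc A).
  pose proof (Hpos (tri l)). pose proof (HXpos l). pose proof (Hpos l).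
  apply Rmult_le_compat; auto; nra.
Qed.

Lemma Cmod_neg_one : Cmod (-1) = 1%R.
Proof. rewrite Cmod_R, Rabs_left; lra. Qed.

Lemma theta_term_mod_nonneg_index (x Q : C) l :
  Cmod (jterm x Q (Z.of_nat l)) = (Cmod Q ^ tri l * Cmod x ^ l)%R.
Proof.
  unfold jterm. rewrite (half_exact (Z.of_nat (tri l))) by (pose proof (tri_spec l); lia).
  rewrite !zpow_nat, !Cmod_mult, !Cmod_pow, Cmod_neg_one, pow1. ring.
Qed.

Lemma theta_term_mod_neg_index (x Q : C) l : x <> 0 ->
  Cmod (jterm x Q (- Z.of_nat l)) = (Cmod Q ^ tri (S l) * (/ Cmod x) ^ l)%R.
Proof.
  intros Hx. unfold jterm.
  rewrite (half_exact (Z.of_nat (tri (S l))))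
    by (pose proof (tri_spec (S l)); rewrite Nat2Z.inj_succ in *; lia).
  rewrite !zpow_neg_nat, !zpow_nat by (auto using neg_one_neq0).
  rewrite !Cmod_mult, !Cmod_inv by (apply Cpow_nz; auto using neg_one_neq0).
  rewrite !Cmod_pow, Cmod_neg_one, pow1, pow_inv. field.
  apply pow_nonzero. intros H. apply Cmod_eq_0 in H. auto.
Qed.

Lemma theta_term_bound (x Q : C) : x <> 0 -> (0 < Cmod Q < 1)%R ->
  exists A, (0 <= A)%R /\ forall m n,
    (Cmod (jterm x Q (Z.of_nat m - Z.of_nat n)) <= A * Cmod Q ^ (2 * ((m - n) + (n - m))))%R.
Proof.
  intros Hx HQ.
  assert (HX : (0 < Cmod x)%R) by (apply Cmod_gt_0; auto).
  destruct (gaussian_decay (Cmod Q) (Cmod x) HQ ltac:(lra)) as [A1 [HA1 H1]].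
  destruct (gaussian_decay (Cmod Q) (/ Cmod x) HQ) as [A2 [HA2 H2]].
  { left. apply Rinv_0_lt_compat; auto. }
  exists (A1 + A2)%R. split; [lra|]. intros m n.
  assert (Hpos : forall k, (0 <= Cmod Q ^ k)%R) by (intros; apply pow_le; lra).
  destruct (le_lt_dec n m) as [Hnm | Hmn].
  - replace (Z.of_nat m - Z.of_nat n)%Z with (Z.of_nat (m - n)) by lia.
    replace ((m - n) + (n - m))%nat with (m - n)%nat by lia.
    rewrite theta_term_mod_nonneg_index. specialize (H1 (m - n)%nat).
    pose proof (Hpos (2 * (m - n))%nat). nra.
  - replace (Z.of_nat m - Z.of_nat n)%Z with (- Z.of_nat (n - m))%Z by lia.
    replace ((m - n) + (n - m))%nat with (n - m)%nat by lia.
    rewrite theta_term_mod_neg_index by auto. specialize (H2 (n - m)%nat).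
    pose proof (Hpos (2 * (n - m))%nat).
    assert (Cmod Q ^ tri (S (n - m)) <= Cmod Q ^ tri (n - m))%R
      by (apply pow_antitone; [lra | simpl; lia]).
    assert (0 <= (/ Cmod x) ^ (n - m))%R by (apply pow_le; left; apply Rinv_0_lt_compat; auto).
    nra.
Qed.

Definition qtail (Q : C) (c n : nat) : C := prodc (fun k => 1 - Q ^ S (c + k)) n.

Lemma qfact_split Q c n : qfact Q (c + n) = qfact Q c * qtail Q c n.
Proof. apply prodc_add. Qed.

Lemma qtail_term_bound (Q : C) c k :
  (Cmod Q < 1)%R -> (Cmod (Q ^ S (c + k)) <= Cmod Q ^ c * Cmod Q ^ k)%R.
Proof.
  intros HQ. rewrite Cmod_pow, <- pow_add.
  apply pow_antitone; [split; [apply Cmod_ge_0 | lra] | lia].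
Qed.

Lemma qtail_dev_bound (Q : C) c n :
  (Cmod Q < 1)%R -> (Cmod (qtail Q c n - 1) <= exp (Cmod Q ^ c / (1 - Cmod Q)) - 1)%R.
Proof.
  intros HQ. eapply Rle_trans; [apply prod_dev_bound|].
  apply Rplus_le_compat_r, exp_monotone.
  pose proof (dominated_tail_sum (fun k => Q ^ S (c + k)) (Cmod Q ^ c) (Cmod Q)
                (pow_le _ c (Cmod_ge_0 Q)) (conj (Cmod_ge_0 Q) HQ)
                (fun k => qtail_term_bound Q c k HQ) 0 n) as Hsum.
  rewrite pow_O, Rmult_1_r in Hsum. exact Hsum.
Qed.

Lemma one_sub_pow_neq0 (Q : C) k : (Cmod Q < 1)%R -> 1 - Q ^ S k <> 0.
Proof.
  intros HQ H.
  assert (Hpow : Q ^ S k = 1)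
    by (replace (Q ^ S k) with (1 - (1 - Q ^ S k)) by ring; rewrite H; ring).
  assert (Cmod Q ^ S k < 1)%R by (apply pow_lt_1_compat; [split; [apply Cmod_ge_0 | lra] | lia]).
  rewrite <- Cmod_pow, Hpow, Cmod_1 in H0. lra.
Qed.

Lemma gauss_binom_as_tail Q N m : (Cmod Q < 1)%R -> (m <= N)%nat ->
  gauss_binom Q N m * qfact Q m = qtail Q (N - m) m.
Proof.
  intros HQ HmN.
  assert (Hnz : qfact Q (N - m) <> 0)
    by (apply prodc_neq0; intros; apply one_sub_pow_neq0; auto).
  apply (Cmult_reg_r _ _ _ Hnz).
  rewrite (gauss_binom_closed Q N m HmN).
  replace N with ((N - m) + m)%nat at 1 by lia. rewrite qfact_split. ring.
Qed.

Lemma mult_dev_bound (P T : C) a b : (0 <= a)%R -> (0 <= b)%R ->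
  (Cmod (P - 1) <= a)%R -> (Cmod (T - 1) <= b)%R -> (Cmod (P * T - 1) <= a * b + a + b)%R.
Proof.
  intros Ha Hb HP HT.
  replace (P * T - 1) with ((P - 1) * (T - 1) + ((P - 1) + (T - 1))) by ring.
  eapply Rle_trans; [apply Cmod_triangle|]. rewrite Cmod_mult.
  eapply Rle_trans; [apply Rplus_le_compat_l, Cmod_triangle|].
  pose proof (Cmod_ge_0 (P - 1)). pose proof (Cmod_ge_0 (T - 1)).
  assert (Cmod (P - 1) * Cmod (T - 1) <= a * b)%R by (apply Rmult_le_compat; auto). lra.
Qed.

Lemma qfact_limit_split (Q Qinf : C) m :
  (Cmod Q < 1)%R -> converges (qfact Q) Qinf ->
  exists T, converges (qtail Q m) T /\ Qinf = qfact Q m * T.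
Proof.
  intros HQ HQinf.
  pose proof (prod_converges (fun k => Q ^ S (m + k)) (Cmod Q ^ m) (Cmod Q)
                (pow_le _ m (Cmod_ge_0 Q)) (conj (Cmod_ge_0 Q) HQ)
                (fun k => qtail_term_bound Q m k HQ)) as HT.
  set (T := @lim C_CompleteNormedModule _) in HT. change (converges (qtail Q m) T) in HT.
  exists T. split; [exact HT|].
  apply (converges_unique (fun M => qfact Q (m + M))).
  - apply (converges_subseq (qfact Q) Qinf (fun M => m + M)%nat); auto. intros; lia.
  - eapply converges_ext; [|apply (converges_scal (qfact Q m) _ _ HT)].
    intros M. symmetry. apply qfact_split.
Qed.

(** Multiplied by [(Q;Q)_oo], the Gaussian binomial [[N m]_Q] is within
    [O(|Q|^m + |Q|^(N-m))] of 1: it becomes [(Q^(N-m+1);Q)_m (Q^(m+1);Q)_oo]. *)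
Lemma gauss_binom_limit_bound (Q Qinf : C) N m :
  (Cmod Q < 1)%R -> converges (qfact Q) Qinf -> (m <= N)%nat ->
  (Cmod (gauss_binom Q N m * Qinf - 1)
     <= exp (2 / (1 - Cmod Q)) / (1 - Cmod Q) * (Cmod Q ^ m + Cmod Q ^ (N - m)))%R.
Proof.
  intros HQ HQinf HmN.
  destruct (qfact_limit_split Q Qinf m HQ HQinf) as [T [HT HQT]].
  replace (gauss_binom Q N m * Qinf) with (qtail Q (N - m) m * T)
    by (rewrite HQT, <- gauss_binom_as_tail by auto; ring).
  set (r := Cmod Q) in *.
  assert (Hr : (0 <= r < 1)%R) by (split; [apply Cmod_ge_0 | lra]).
  set (s1 := (r ^ (N - m) / (1 - r))%R). set (s2 := (r ^ m / (1 - r))%R).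
  assert (Hs1 : (0 <= s1)%R) by (apply Rdiv_le_0_compat; [apply pow_le|]; lra).
  assert (Hs2 : (0 <= s2)%R) by (apply Rdiv_le_0_compat; [apply pow_le|]; lra).
  assert (Hlim : (Cmod (qtail Q (N - m) m * T - 1) <= exp (s1 + s2) - 1)%R).
  { apply (converges_ball (fun M => qtail Q (N - m) m * qtail Q m M));
      [apply converges_scal, HT|].
    intros M.
    pose proof (qtail_dev_bound Q (N - m) m HQ) as Hdev1.
    pose proof (qtail_dev_bound Q m M HQ) as Hdev2. fold r s1 s2 in Hdev1, Hdev2.
    pose proof (exp_ineq1_le s1). pose proof (exp_ineq1_le s2).
    eapply Rle_trans; [apply (mult_dev_bound _ _ (exp s1 - 1) (exp s2 - 1)); auto; lra|].
    rewrite exp_plus. right. ring. }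
  eapply Rle_trans; [apply Hlim|].
  eapply Rle_trans; [apply exp_sub_one_le; lra|].
  assert (Hsum : (s1 + s2 = (r ^ m + r ^ (N - m)) / (1 - r))%R) by (unfold s1, s2; field; lra).
  assert (Hexp : (exp (s1 + s2) <= exp (2 / (1 - r)))%R).
  { apply exp_monotone. rewrite Hsum. unfold Rdiv. apply Rmult_le_compat_r.
    - left; apply Rinv_0_lt_compat; lra.
    - pose proof (pow_le_one r m ltac:(lra)). pose proof (pow_le_one r (N - m) ltac:(lra)). lra. }
  rewrite Hsum in *.
  replace (exp (2 / (1 - r)) / (1 - r) * (r ^ m + r ^ (N - m)))%R
    with ((r ^ m + r ^ (N - m)) / (1 - r) * exp (2 / (1 - r)))%R by (field; lra).
  apply Rmult_le_compat_l; lra.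
Qed.

Lemma converges_of_geometric_error u l B s : (0 <= B)%R -> (0 <= s < 1)%R ->
  (forall n, (Cmod (u n - l) <= B * s ^ n)%R) -> converges u l.
Proof.
  intros HB Hs Herr eps Heps.
  destruct (pow_eventually_small s Hs (eps / (B + 1))%R) as [N HN];
    [apply Rdiv_lt_0_compat; lra|].
  exists N. intros n Hn. specialize (HN n Hn).
  eapply Rle_lt_trans; [apply Herr|].
  assert (Hlt : (s ^ n * (B + 1) < eps)%R).
  { apply Rmult_lt_reg_r with (/ (B + 1))%R; [apply Rinv_0_lt_compat; lra|].
    replace (s ^ n * (B + 1) * / (B + 1))%R with (s ^ n)%R by (field; lra).
    exact HN. }
  pose proof (pow_le s n ltac:(lra)). nra.
Qed.

Lemma theta_partial_error_expansion (x Q Qinf : C) n : x <> 0 -> Q <> 0 ->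
  theta_prod x Q n * Qinf - jpart x Q n
  = sumc (fun m => jterm x Q (Z.of_nat m - Z.of_nat n) * (gauss_binom Q (n + n) m * Qinf - 1))
         (S (n + n)).
Proof.
  intros Hx HQ. unfold jpart. rewrite sum_n_sumc, finite_triple_product by auto.
  replace (2 * n)%nat with (n + n)%nat by lia.
  rewrite <- (Cmult_comm Qinf), <- sumc_scal, <- sumc_minus.
  apply sumc_ext. intros; ring.
Qed.

Lemma error_term_bound (r A K a b : R) m n :
  (0 <= r <= 1)%R -> (0 <= A)%R -> (0 <= K)%R -> (0 <= a)%R -> (0 <= b)%R ->
  (m <= n + n)%nat ->
  (a <= A * r ^ (2 * ((m - n) + (n - m))))%R -> (b <= K * (r ^ m + r ^ (n + n - m)))%R ->
  (a * b <= 2 * A * K * sqrt r ^ (n + m))%R.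
Proof.
  intros Hr HA HK Ha Hb Hm Hab Hbb.
  set (d := ((m - n) + (n - m))%nat) in *.
  assert (H1 : (r ^ (2 * d) * r ^ m <= sqrt r ^ (n + m))%R)
    by (rewrite <- pow_add; apply pow_le_sqrt_pow; [lra | unfold d; lia]).
  assert (H2 : (r ^ (2 * d) * r ^ (n + n - m) <= sqrt r ^ (n + m))%R)
    by (rewrite <- pow_add; apply pow_le_sqrt_pow; [lra | unfold d; lia]).
  eapply Rle_trans; [apply Rmult_le_compat; eauto|].
  replace (A * r ^ (2 * d) * (K * (r ^ m + r ^ (n + n - m))))%R
    with (A * K * (r ^ (2 * d) * r ^ m + r ^ (2 * d) * r ^ (n + n - m)))%R by ring.
  assert (0 <= A * K)%R by (apply Rmult_le_pos; auto).
  nra.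
Qed.

Lemma theta_partial_error (x Q Qinf : C) :
  x <> 0 -> Q <> 0 -> (Cmod Q < 1)%R -> converges (qfact Q) Qinf ->
  exists B, (0 <= B)%R /\ forall n,
    (Cmod (theta_prod x Q n * Qinf - jpart x Q n) <= B * sqrt (Cmod Q) ^ n)%R.
Proof.
  intros Hx HQ HQ1 HQinf.
  set (r := Cmod Q) in *. set (s := sqrt r).
  assert (Hr : (0 < r)%R) by (apply Cmod_gt_0; auto).
  assert (Hs : (0 <= s < 1)%R).
  { split; [apply sqrt_pos|]. rewrite <- sqrt_1. apply sqrt_lt_1_alt. lra. }
  destruct (theta_term_bound x Q Hx (conj Hr HQ1)) as [A [HA Hterm]].
  set (K := (exp (2 / (1 - r)) / (1 - r))%R).
  assert (HK : (0 <= K)%R) by (apply Rdiv_le_0_compat; [left; apply exp_pos | lra]).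
  exists (2 * A * K / (1 - s))%R. split; [apply Rdiv_le_0_compat; [|lra]; nra|].
  intros n. rewrite theta_partial_error_expansion by auto.
  eapply Rle_trans; [apply Cmod_sumc|].
  replace (2 * A * K / (1 - s) * s ^ n)%R with (2 * A * K * s ^ n / (1 - s))%R by (field; lra).
  eapply Rle_trans; [|apply (geom_tail (2 * A * K) s n (S (n + n))); [nra | auto]].
  apply sumr_le. intros m Hm. rewrite Cmod_mult.
  apply (error_term_bound r A K); [lra | auto | auto | apply Cmod_ge_0 | apply Cmod_ge_0 | lia
    | apply Hterm | apply gauss_binom_limit_bound; auto; lia].
Qed.

Theorem jacobi_triple_product (x Q : C) : x <> 0 -> Q <> 0 -> (Cmod Q < 1)%R ->
  exists E Qinf, converges (theta_prod x Q) E /\ converges (qfact Q) Qinf /\ j x Q = E * Qinf.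
Proof.
  intros Hx HQ HQ1.
  set (r := Cmod Q) in *.
  assert (Hr : (0 <= r < 1)%R) by (split; [apply Cmod_ge_0 | lra]).
  assert (HX : (0 < Cmod x)%R) by (apply Cmod_gt_0; auto).
  assert (Hpow : forall k, Cmod (Q ^ k) = (r ^ k)%R) by (intros; apply Cmod_pow).
  assert (Hdom1 : forall k, (Cmod (x * Q ^ k) <= Cmod x * r ^ k)%R)
    by (intros k; rewrite Cmod_mult, Hpow; lra).
  assert (Hdom2 : forall k, (Cmod (Q ^ S k / x) <= r / Cmod x * r ^ k)%R)
    by (intros k; rewrite Cmod_div, Hpow by auto; simpl; right; field; apply Rgt_not_eq; lra).
  assert (Hdom3 : forall k, (Cmod (Q ^ S k) <= 1 * r ^ k)%R)
    by (intros k; rewrite Hpow; simpl; pose proof (pow_le r k); nra).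
  assert (HK2 : (0 <= r / Cmod x)%R) by (apply Rdiv_le_0_compat; lra).
  pose proof (prod_converges _ _ _ (Cmod_ge_0 x) Hr Hdom1) as HE1.
  pose proof (prod_converges _ _ _ HK2 Hr Hdom2) as HE2.
  pose proof (prod_converges _ _ _ Rle_0_1 Hr Hdom3) as HQinf.
  set (E1 := @lim C_CompleteNormedModule _) in HE1.
  set (E2 := @lim C_CompleteNormedModule _) in HE2.
  set (Qinf := @lim C_CompleteNormedModule _) in HQinf.
  change (converges (qfact Q) Qinf) in HQinf.
  assert (HE : converges (theta_prod x Q) (E1 * E2)).
  { eapply converges_ext; [|apply (converges_mult _ _ _ _ HE1 HE2)].
    intros n. unfold theta_prod. rewrite prodc_mul. reflexivity. }
  exists (E1 * E2), Qinf. split; [exact HE|]. split; [exact HQinf|].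
  destruct (theta_partial_error x Q Qinf Hx HQ HQ1 HQinf) as [B [HB Herr]].
  assert (Hs : (0 <= sqrt r < 1)%R).
  { split; [apply sqrt_pos|]. rewrite <- sqrt_1. apply sqrt_lt_1_alt. lra. }
  assert (Herr0 : converges (fun n => theta_prod x Q n * Qinf - jpart x Q n) 0).
  { apply (converges_of_geometric_error _ _ B (sqrt r) HB Hs).
    intros n. rewrite Csub_0_r. apply Herr. }
  unfold j. apply lim_of_converges.
  replace (E1 * E2 * Qinf) with (E1 * E2 * Qinf + (-1) * 0) by ring.
  eapply converges_ext;
    [|apply (converges_plus _ _ _ _ (converges_mult _ _ _ _ HE (converges_const Qinf))
                                    (converges_scal (-1) _ _ Herr0))].
  intros n. simpl. ring.
Qed.

(** [qpoch q s r L] is the infinite product [(s q^r; q^L)_oo = prod_(k>=0) (1 - s q^(r+Lk))]. *)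
Definition qpoch (q s : C) (r L : nat) : C :=
  @lim C_CompleteNormedModule
    (filtermap (prodc (fun k => 1 - s * q ^ (r + L * k))) eventually).

Section Specialisation.
Variable q : C.
Hypothesis Hq0 : q <> 0.
Hypothesis Hq1 : (Cmod q < 1)%R.

Lemma qpoch_term_bound (s : C) r L k : (Cmod s <= 1)%R -> (1 <= L)%nat ->
  (Cmod (s * q ^ (r + L * k)) <= 1 * Cmod q ^ k)%R.
Proof.
  intros Hs HL. rewrite Cmod_mult, Cmod_pow, Rmult_1_l.
  assert (Cmod q ^ (r + L * k) <= Cmod q ^ k)%R
    by (apply pow_antitone; [split; [apply Cmod_ge_0 | lra] | nia]).
  pose proof (Cmod_ge_0 s). pose proof (pow_le (Cmod q) (r + L * k) (Cmod_ge_0 q)). nra.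
Qed.

Lemma qpoch_converges (s : C) r L : (Cmod s <= 1)%R -> (1 <= L)%nat ->
  converges (prodc (fun k => 1 - s * q ^ (r + L * k))) (qpoch q s r L).
Proof.
  intros Hs HL.
  exact (prod_converges _ 1 (Cmod q) Rle_0_1 (conj (Cmod_ge_0 q) Hq1)
           (fun k => qpoch_term_bound s r L k Hs HL)).
Qed.

Lemma qpoch_neq0 (s : C) r L : (Cmod s <= 1)%R -> (1 <= r)%nat -> (1 <= L)%nat ->
  qpoch q s r L <> 0.
Proof.
  intros Hs Hr HL.
  apply (prod_limit_neq0 _ 1 (Cmod q) Rle_0_1 (conj (Cmod_ge_0 q) Hq1)
           (fun k => qpoch_term_bound s r L k Hs HL)); [|apply qpoch_converges; auto].
  intros k H.
  assert (Hone : s * q ^ (r + L * k) = 1)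
    by (replace (s * q ^ (r + L * k)) with (1 - (1 - s * q ^ (r + L * k))) by ring;
        rewrite H; ring).
  assert (Cmod q ^ (r + L * k) < 1)%R
    by (apply pow_lt_1_compat; [split; [apply Cmod_ge_0 | auto] | lia]).
  assert (Cmod (s * q ^ (r + L * k)) < 1)%R.
  { rewrite Cmod_mult, Cmod_pow. pose proof (Cmod_ge_0 s).
    pose proof (pow_le (Cmod q) (r + L * k) (Cmod_ge_0 q)). nra. }
  rewrite Hone, Cmod_1 in *. lra.
Qed.

Lemma qpoch_dissect (s : C) r L d : (Cmod s <= 1)%R -> (1 <= d)%nat -> (1 <= L)%nat ->
  qpoch q s r L = prodc (fun i => qpoch q s (r + L * i) (L * d)) d.
Proof.
  intros Hs Hd HL.
  apply (converges_unique (fun N => prodc (fun k => 1 - s * q ^ (r + L * k)) (d * N))).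
  - apply (converges_subseq (prodc _) _ (fun N => d * N)%nat); [intros; nia|].
    apply qpoch_converges; auto.
  - eapply converges_ext;
      [|apply (converges_prodc
                 (fun i N => prodc (fun k => 1 - s * q ^ (r + L * i + L * d * k)) N))].
    + intros N. rewrite prodc_block. apply prodc_ext. intros i _.
      apply prodc_ext. intros k _. do 3 f_equal. nia.
    + intros i _. apply qpoch_converges; auto. nia.
Qed.

Lemma qfact_converges m : (1 <= m)%nat -> converges (qfact (q ^ m)) (qpoch q 1 m m).
Proof.
  intros Hm. eapply converges_ext; [|apply (qpoch_converges 1 m m); auto].
  - intros N. unfold qfact. apply prodc_ext. intros k _.
    rewrite <- Cpow_mult_r. replace (m * S k)%nat with (m + m * k)%nat by lia. ring.
  - rewrite Cmod_1. lra.
Qed.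

Lemma Cmod_involution (s : C) : s * s = 1 -> Cmod s = 1%R.
Proof.
  intros Hs. assert (Hsq : (Cmod s * Cmod s = 1)%R) by (rewrite <- Cmod_mult, Hs; apply Cmod_1).
  pose proof (Cmod_ge_0 s). nra.
Qed.

Lemma involution_neq0 (s : C) : s * s = 1 -> s <> 0.
Proof. intros Hs H. subst s. apply C1_nz. rewrite <- Hs. ring. Qed.

Lemma j_qpoch (s : C) a m : s * s = 1 -> (0 < a < m)%nat ->
  j (s * q ^ a) (q ^ m) = qpoch q s a m * qpoch q s (m - a) m * qpoch q 1 m m.
Proof.
  intros Hs Ham.
  assert (Hs1 : (Cmod s <= 1)%R) by (rewrite Cmod_involution; auto; lra).
  assert (Hs0 := involution_neq0 s Hs).
  destruct (jacobi_triple_product (s * q ^ a) (q ^ m)) as [E [Qinf [HE [HQinf ->]]]].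
  - apply Cmult_neq_0; [auto | apply Cpow_nz; auto].
  - apply Cpow_nz; auto.
  - rewrite Cmod_pow. apply pow_lt_1_compat; [split; [apply Cmod_ge_0 | auto] | lia].
  - f_equal.
    + apply (converges_unique (theta_prod (s * q ^ a) (q ^ m))); auto.
      eapply converges_ext;
        [|apply (converges_mult _ _ _ _ (qpoch_converges s a m Hs1 ltac:(lia))
                                    (qpoch_converges s (m - a) m Hs1 ltac:(lia)))].
      intros N. unfold theta_prod. rewrite <- prodc_mul. apply prodc_ext. intros k _.
      rewrite <- !Cpow_mult_r.
      assert (Hquot : q ^ (m * S k) / (s * q ^ a) = s * q ^ (m - a + m * k)).
      { replace (m * S k)%nat with (m - a + m * k + a)%nat by lia.
        rewrite (Cpow_add_r q _ a).
        transitivity ((s * s) * (q ^ (m - a + m * k) * q ^ a) / (s * q ^ a));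
          [rewrite Hs, Cmult_1_l; reflexivity|].
        field. split; [apply Cpow_nz|]; auto. }
      rewrite Hquot, Cpow_add_r. ring.
    + apply (converges_unique (qfact (q ^ m))); auto. apply qfact_converges. lia.
Qed.

(** Triple product at [x = s] itself (the case [a = 0]): the factor [k = 0] of
    [prod (1 - x Q^k)] is [1 - s], and the remaining factors pair up. *)
Lemma j_qpoch_zero (s : C) m : s * s = 1 -> (0 < m)%nat ->
  j s (q ^ m) = (1 - s) * qpoch q s m m * qpoch q s m m * qpoch q 1 m m.
Proof.
  intros Hs Hm.
  assert (Hs1 : (Cmod s <= 1)%R) by (rewrite Cmod_involution; auto; lra).
  assert (Hs0 := involution_neq0 s Hs).
  destruct (jacobi_triple_product s (q ^ m)) as [E [Qinf [HE [HQinf ->]]]]; auto.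
  - apply Cpow_nz; auto.
  - rewrite Cmod_pow. apply pow_lt_1_compat; [split; [apply Cmod_ge_0 | auto] | lia].
  - set (P := prodc (fun k => 1 - s * q ^ (m + m * k))).
    assert (Hsplit : forall N, theta_prod s (q ^ m) (S N) = (1 - s) * P N * P (S N)).
    { intros N. unfold theta_prod, P. rewrite prodc_mul, prodc_front. simpl Cpow.
      rewrite Cmult_1_r.
      rewrite (prodc_ext (fun k => 1 - s * (q ^ m) ^ S k) (fun k => 1 - s * q ^ (m + m * k)))
        by (intros k _; rewrite <- Cpow_mult_r; do 3 f_equal; lia).
      rewrite (prodc_ext (fun k => 1 - (q ^ m) ^ S k / s) (fun k => 1 - s * q ^ (m + m * k)))
        by (intros k _; rewrite <- Cpow_mult_r; replace (m * S k)%nat with (m + m * k)%nat by lia;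
            transitivity (1 - (s * s) * q ^ (m + m * k) / s); [rewrite Hs, Cmult_1_l; reflexivity|];
            field; auto).
      ring. }
    pose proof (qpoch_converges s m m Hs1 ltac:(lia)) as HP. fold P in HP.
    f_equal; [|apply (converges_unique (qfact (q ^ m))); auto; apply qfact_converges; lia].
    apply (converges_unique (fun N => theta_prod s (q ^ m) (S N))).
    + apply (converges_subseq (theta_prod s (q ^ m)) E S); auto.
    + eapply converges_ext; [intros N; symmetry; apply Hsplit|].
      apply converges_mult; [apply converges_scal; exact HP|].
      apply (converges_subseq P _ S); auto.
Qed.

Lemma qpoch_neg_one r L : (1 <= r)%nat -> (1 <= L)%nat ->
  qpoch q (-1) r L = qpoch q 1 (2 * r) (2 * L) / qpoch q 1 r L.
Proof.
  intros Hr HL.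
  assert (Hm1 : (Cmod (-1) <= 1)%R) by (rewrite Cmod_neg_one; lra).
  assert (H1 : (Cmod 1 <= 1)%R) by (rewrite Cmod_1; lra).
  apply div_of_mult_eq; [apply qpoch_neq0; auto|].
  apply (converges_unique (fun N => prodc (fun k => 1 - (-1) * q ^ (r + L * k)) N
                                    * prodc (fun k => 1 - 1 * q ^ (r + L * k)) N)).
  - apply converges_mult; apply qpoch_converges; auto.
  - eapply converges_ext; [|apply (qpoch_converges 1 (2 * r) (2 * L)); auto; lia].
    intros N. rewrite <- prodc_mul. apply prodc_ext. intros k _.
    replace (2 * r + 2 * L * k)%nat with ((r + L * k) + (r + L * k))%nat by lia.
    rewrite Cpow_add_r. ring.
Qed.

Lemma Jam_qpoch (a : Z) m : (0 < a < Z.of_nat m)%Z ->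
  Jam a m q = qpoch q 1 (Z.to_nat a) m * qpoch q 1 (m - Z.to_nat a) m * qpoch q 1 m m.
Proof.
  intros Ha. unfold Jam.
  replace a with (Z.of_nat (Z.to_nat a)) at 1 by lia.
  rewrite zpow_nat, <- (Cmult_1_l (q ^ Z.to_nat a)).
  apply j_qpoch; [ring | lia].
Qed.

Lemma Jbar_qpoch (a : Z) m : (0 < a < Z.of_nat m)%Z ->
  Jbar a m q
  = qpoch q 1 (2 * Z.to_nat a) (2 * m) / qpoch q 1 (Z.to_nat a) m
    * (qpoch q 1 (2 * (m - Z.to_nat a)) (2 * m) / qpoch q 1 (m - Z.to_nat a) m)
    * qpoch q 1 m m.
Proof.
  intros Ha. unfold Jbar.
  replace a with (Z.of_nat (Z.to_nat a)) at 1 by lia.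
  rewrite zpow_nat.
  replace (- q ^ Z.to_nat a) with ((-1) * q ^ Z.to_nat a) by ring.
  rewrite j_qpoch, !qpoch_neg_one by (ring || lia). reflexivity.
Qed.

Lemma Jbar_zero_qpoch m : (0 < m)%nat ->
  Jbar 0 m q
  = 2 * (qpoch q 1 (2 * m) (2 * m) / qpoch q 1 m m)
      * (qpoch q 1 (2 * m) (2 * m) / qpoch q 1 m m) * qpoch q 1 m m.
Proof.
  intros Hm. unfold Jbar. simpl zpow.
  replace (- (1)) with (-1 : C) by ring.
  rewrite j_qpoch_zero, qpoch_neg_one by (ring || lia).
  replace (1 - -1) with (RtoC 2) by (unfold RtoC; apply injective_projections; simpl; ring).
  reflexivity.
Qed.

Lemma Jm_qpoch m : (0 < m)%nat -> Jm m q = qpoch q 1 m m.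
Proof.
  intros Hm. unfold Jm. apply lim_of_converges.
  eapply converges_ext; [|apply (qpoch_converges 1 m m); [rewrite Cmod_1; lra | lia]].
  intros N. induction N as [|N IH]; [reflexivity|].
  simpl prodc. rewrite IH. simpl Jpart. replace (m * S N)%nat with (m + m * N)%nat by lia. ring.
Qed.

End Specialisation.

Lemma qtau_in_disc (tau : C) : (0 < Im tau)%R -> qtau tau <> 0 /\ (Cmod (qtau tau) < 1)%R.
Proof.
  intros Htau.
  assert (Hmod : Cmod (qtau tau) = exp (- (2 * PI * Im tau))).
  { unfold Cmod, qtau. simpl fst. simpl snd.
    set (a := exp (- (2 * PI * Im tau))). set (t := (2 * PI * Re tau)%R).
    replace ((a * cos t) ^ 2 + (a * sin t) ^ 2)%R with (a ^ 2 * (Rsqr (sin t) + Rsqr (cos t)))%R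
      by (unfold Rsqr; ring).
    rewrite sin2_cos2, Rmult_1_r. apply sqrt_pow2. left. apply exp_pos. }
  split.
  - apply Cmod_gt_0. rewrite Hmod. apply exp_pos.
  - rewrite Hmod, <- exp_0. apply exp_increasing. pose proof PI_RGT_0. nra.
Qed.

Definition block60 (q : C) (r : nat) : C := qpoch q 1 r 60.

Lemma qpoch_blocks60 (q : C) r m :
  (Cmod q < 1)%R -> (1 <= m)%nat -> (m * (60 / m) = 60)%nat ->
  qpoch q 1 r m = prodc (fun i => block60 q (r + m * i)) (60 / m).
Proof.
  intros Hq1 Hm Hdiv. rewrite (qpoch_dissect q Hq1 1 r m (60 / m)), Hdiv;
    [reflexivity | rewrite Cmod_1; lra | destruct (60 / m)%nat; lia | exact Hm].
Qed.

(** The blocks are nonzero, so the rational identities may be checked by [field]. *)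
Lemma block60_neq0 (q : C) r : (Cmod q < 1)%R -> (1 <= r)%nat -> block60 q r <> 0.
Proof.
  intros Hq1 Hr. unfold block60.
  apply qpoch_neq0; [exact Hq1 | rewrite Cmod_1; lra | exact Hr | lia].
Qed.

Theorem lemma2p3 (tau : C) (Htau : (0 < Im tau)%R) :
  let q := qtau tau in
  let common :=
    (Jam 6 60 q * Jbar 5 30 q * Jbar 10 30 q)
      / (Jbar 0 5 q * Jbar 0 30 q * Jbar 3 30 q)
    * ((Jm 6 q * Jm 60 q) / Cpow (Jm 30 q) 4) in
  (Cpow (Jm 30 q) 3 / Jbar 0 5 q * (Jam 3 6 q / Jam 3 30 q)
    - 2 * common * (Jam 9 30 q * Jam 21 30 q * Jam 15 30 q * Jam 5 30 q) = 0)
  /\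
  (4 * common * (Jam 16 30 q * Jam 20 30 q * Jam 26 30 q * Jam 10 30 q)
    = Jam 4 10 q * Jam 3 15 q).
Proof.
  cbv zeta. destruct (qtau_in_disc tau Htau) as [Hq0 Hq1].
  set (q := qtau tau) in *.
  rewrite !(Jbar_zero_qpoch q Hq0 Hq1), !(Jbar_qpoch q Hq0 Hq1),
          !(Jam_qpoch q Hq0 Hq1), !(Jm_qpoch q Hq1) by lia.
  rewrite !(qpoch_blocks60 q) by (try exact Hq1; vm_compute; lia).
  cbv [prodc Nat.div Nat.divmod Nat.mul Nat.add Nat.sub Z.to_nat Pos.to_nat Pos.iter_op fst snd].
  split; field; repeat split; apply block60_neq0; solve [exact Hq1 | lia].
Qed.
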